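(* Fix $\delta\in[0,1)$ and $V_{\sf P}\ge0$. Then $$\lim_{p\to0}g(\delta,\rho_1,c)=1,\qquad \lim_{p\to0}g(\delta,\rho_2,c)=\frac{1-\delta}{1-\delta\rho_2},$$ where $\rho_1$ and $c$ depend on $p$ as defined below and $\rho_2$ does not depend on $p$.
   Context: For $p\in(0,1)$ and $V_{\sf P}\ge0$ define $\rho_1=\frac{e^{(1-p)/p}}{1+e^{V_{\sf P}}+e^{(1-p)/p}}$, $\rho_2=\frac{e^{-1}}{1+e^{V_{\sf P}}+e^{-1}}$, and $c=\frac{\ln((1-\rho_2)/(1-\rho_1))}{\ln(\rho_1/\rho_2)+\ln((1-\rho_2)/(1-\rho_1))}$. For $\rho,x\in[0,1]$, let $X_1(\rho,x),X_2(\rho,x),\dots$ be i.i.d. random variables with $X_k=1-x$ with probability $\rho$ and $X_k=-x$ with probability $1-\rho$; let $S_n(\rho,x)=\sum_{k=1}^nX_k(\rho,x)$ and $N(\rho,x)=\inf\{n\ge1:S_n(\rho,x)<0\}$. Define $g(\delta,\rho,x)=\mathbb E\left[1-\delta^{N(\rho,x)}\right]$ (with the convention $\delta^{\infty}=0$). *)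

From Stdlib Require Import Reals Lra List.
From Coquelicot Require Import Coquelicot.
Import ListNotations.
Open Scope R_scope.

Definition rho1 (p VP : R) : R :=
  exp ((1 - p) / p) / (1 + exp VP + exp ((1 - p) / p)).
Definition rho2 (VP : R) : R := exp (-1) / (1 + exp VP + exp (-1)).
Definition cpar (p VP : R) : R :=
  ln ((1 - rho2 VP) / (1 - rho1 p VP)) /
  (ln (rho1 p VP / rho2 VP) + ln ((1 - rho2 VP) / (1 - rho1 p VP))).

(* The random walk: outcomes of the first n i.i.d. steps are encoded by
   a list of booleans (true = step 1-x, prob rho; false = step -x, prob 1-rho). *)
Fixpoint bseqs (n : nat) : list (list bool) :=
  match n with
  | O => [nil]
  | S m => map (cons true) (bseqs m) ++ map (cons false) (bseqs m)
  end.

Definition step (x : R) (b : bool) : R := if b then 1 - x else - x.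

Definition psum (x : R) (l : list bool) (m : nat) : R :=
  fold_right Rplus 0 (map (step x) (firstn m l)).

Definition weight (rho : R) (l : list bool) : R :=
  fold_right Rmult 1 (map (fun b : bool => if b then rho else 1 - rho) l).

Definition isneg (a : R) : bool := if Rlt_dec a 0 then true else false.

Definition firstneg (x : R) (l : list bool) (n : nat) : bool :=
  isneg (psum x l n) &&
  forallb (fun m => negb (isneg (psum x l m))) (seq 1 (Nat.pred n)).

Definition probN (rho x : R) (n : nat) : R :=
  fold_right Rplus 0
    (map (fun l => if firstneg x l n then weight rho l else 0) (bseqs n)).

(* g(delta,rho,x) = E[1 - delta^N] with delta^infinity = 0, i.e.
   1 - sum_{n>=1} delta^n P(N = n)  (the n = 0 term is 0 since N >= 1). *)
Definition gfun (delta rho x : R) : R :=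
  1 - Series (fun n => delta ^ n * probN rho x n).

From Stdlib Require Import Reals Lra Lia List.
From Coquelicot Require Import Coquelicot.
Open Scope R_scope.

(* The up-step [1 - c] is nonnegative, so the all-up path never goes negative and
   [P(N = n) <= 1 - rho ^ n]; hence [g(delta, rho, c)] is within
   [(1 - rho) / (1 - delta) ^ 2] of [1], and [1 - rho_1 = O(p)].
   For [rho_2], [c -> 1] as [p -> 0], so for any fixed [M] no [M] up-steps can lift the
   walk to [c]: the walk then goes negative exactly at its first down-step, [N] is
   geometric on [{1, ..., M + 1}], and [g] is within [delta ^ (M + 1) / (1 - delta)]
   of the geometric value [(1 - delta) / (1 - delta rho_2)]. *)

Definition sum_bseqs (n : nat) (F : list bool -> R) : R :=
  fold_right Rplus 0 (map F (bseqs n)).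

Lemma sum_bseqs_cons n F :
  sum_bseqs (S n) F =
  sum_bseqs n (fun l => F (true :: l)) + sum_bseqs n (fun l => F (false :: l)).
Proof.
  unfold sum_bseqs; simpl. rewrite map_app, !map_map.
  induction (map (fun l => F (true :: l)) (bseqs n)) as [|a L IH]; simpl; lra.
Qed.

Lemma sum_bseqs_ext n F G : (forall l, F l = G l) -> sum_bseqs n F = sum_bseqs n G.
Proof. intros H. unfold sum_bseqs. f_equal. now apply map_ext. Qed.

Lemma sum_bseqs_le n F G : (forall l, F l <= G l) -> sum_bseqs n F <= sum_bseqs n G.
Proof.
  intros H. unfold sum_bseqs.
  induction (bseqs n) as [|a L IH]; simpl; [lra|]. specialize (H a). lra.
Qed.

Lemma sum_bseqs_scal_l n k F : sum_bseqs n (fun l => k * F l) = k * sum_bseqs n F.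
Proof. unfold sum_bseqs. induction (bseqs n) as [|a L IH]; simpl; [ring|rewrite IH; ring]. Qed.

Lemma sum_bseqs_0 n : sum_bseqs n (fun _ => 0) = 0.
Proof. unfold sum_bseqs. induction (bseqs n) as [|a L IH]; simpl; [ring|rewrite IH; ring]. Qed.

Lemma sum_bseqs_ge0 n F : (forall l, 0 <= F l) -> 0 <= sum_bseqs n F.
Proof. intros H. rewrite <- (sum_bseqs_0 n). now apply sum_bseqs_le. Qed.

Lemma weight_cons rho b l :
  weight rho (b :: l) = (if b then rho else 1 - rho) * weight rho l.
Proof. reflexivity. Qed.

Lemma weight_ge0 rho l : 0 <= rho <= 1 -> 0 <= weight rho l.
Proof.
  intros H. induction l as [|b l IH]; [unfold weight; simpl; lra|].
  rewrite weight_cons. destruct b; nra.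
Qed.

Lemma sum_bseqs_weight rho n : sum_bseqs n (weight rho) = 1.
Proof.
  induction n as [|n IH]; [unfold sum_bseqs, weight; simpl; lra|].
  rewrite sum_bseqs_cons.
  rewrite (sum_bseqs_ext n _ (fun l => rho * weight rho l)) by reflexivity.
  rewrite (sum_bseqs_ext n (fun l => weight rho (false :: l))
             (fun l => (1 - rho) * weight rho l)) by reflexivity.
  rewrite !sum_bseqs_scal_l, IH. ring.
Qed.

Lemma sum_bseqs_le_weight rho n F k :
  (forall l, F l <= k * weight rho l) -> sum_bseqs n F <= k.
Proof.
  intros H. eapply Rle_trans; [apply (sum_bseqs_le n F (fun l => k * weight rho l)), H|].
  rewrite sum_bseqs_scal_l, sum_bseqs_weight. lra.
Qed.

(* The all-[true] outcome carries the missing mass [rho ^ n]. *)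
Lemma sum_bseqs_le_weight_but_all_true rho n : forall F k,
  (forall l, F l <= k * weight rho l) -> F (repeat true n) <= 0 ->
  sum_bseqs n F <= k * (1 - rho ^ n).
Proof.
  induction n as [|n IH]; intros F k HF Htrue.
  - unfold sum_bseqs; simpl in *. lra.
  - rewrite sum_bseqs_cons.
    assert (Ht : sum_bseqs n (fun l => F (true :: l)) <= k * rho * (1 - rho ^ n)).
    { apply IH; [|exact Htrue]. intros l. specialize (HF (true :: l)).
      rewrite weight_cons in HF. lra. }
    assert (Hf : sum_bseqs n (fun l => F (false :: l)) <= k * (1 - rho)).
    { apply (sum_bseqs_le_weight rho). intros l. specialize (HF (false :: l)).
      rewrite weight_cons in HF. lra. }
    simpl. lra.
Qed.

Lemma probN_ge0 rho x n : 0 <= rho <= 1 -> 0 <= probN rho x n.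
Proof.
  intros Hrho. apply sum_bseqs_ge0. intros l.
  destruct (firstneg x l n); [now apply weight_ge0|lra].
Qed.

Lemma probN_le1 rho x n : 0 <= rho <= 1 -> probN rho x n <= 1.
Proof.
  intros Hrho. apply (sum_bseqs_le_weight rho). intros l.
  pose proof (weight_ge0 rho l Hrho). destruct (firstneg x l n); lra.
Qed.

Lemma isneg_false a : 0 <= a -> isneg a = false.
Proof. intros. unfold isneg. destruct (Rlt_dec a 0); [lra|easy]. Qed.

Lemma isneg_true a : a < 0 -> isneg a = true.
Proof. intros. unfold isneg. destruct (Rlt_dec a 0); [easy|lra]. Qed.

Lemma psum_0 x l : psum x l 0 = 0.
Proof. reflexivity. Qed.

Lemma psum_cons x b l k : psum x (b :: l) (S k) = step x b + psum x l k.
Proof. reflexivity. Qed.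

Lemma psum_repeat_true x n : psum x (repeat true n) n = INR n * (1 - x).
Proof.
  induction n as [|n IH]; [rewrite psum_0; simpl; ring|].
  simpl repeat. rewrite psum_cons, IH, S_INR. simpl. ring.
Qed.

(* With nonnegative up-steps the all-up path never goes below zero. *)
Lemma probN_le_1_sub_pow rho x n :
  0 <= rho <= 1 -> x <= 1 -> probN rho x n <= 1 - rho ^ n.
Proof.
  intros Hrho Hx. rewrite <- (Rmult_1_l (1 - rho ^ n)).
  apply sum_bseqs_le_weight_but_all_true.
  - intros l. pose proof (weight_ge0 rho l Hrho). destruct (firstneg x l n); lra.
  - unfold firstneg. rewrite psum_repeat_true, isneg_false; [simpl; lra|].
    pose proof (pos_INR n). nra.
Qed.

Lemma probN_0 rho x : probN rho x 0 = 0.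
Proof. unfold probN. simpl. unfold firstneg. rewrite psum_0, isneg_false; [simpl; ring|lra]. Qed.

Definition first_neg_from (x s : R) (l : list bool) (n : nat) : bool :=
  isneg (s + psum x l n) &&
  forallb (fun m => negb (isneg (s + psum x l m))) (seq 1 (Nat.pred n)).

Lemma forallb_map_ext {A B} (f : B -> bool) (g : A -> bool) (h : A -> B) L :
  (forall a, f (h a) = g a) -> forallb f (map h L) = forallb g L.
Proof. intros H. induction L as [|a L IH]; simpl; [easy|now rewrite H, IH]. Qed.

Lemma firstneg_eq_from_0 x l n : firstneg x l n = first_neg_from x 0 l n.
Proof.
  unfold firstneg, first_neg_from. rewrite Rplus_0_l. f_equal.
  rewrite <- (map_id (seq 1 (Nat.pred n))) at 1. apply forallb_map_ext.
  intros m. now rewrite Rplus_0_l.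
Qed.

Section FirstStep.

Variables (x s : R) (l : list bool).

Lemma first_neg_from_true_1 : 0 <= s -> x <= 1 -> first_neg_from x s (true :: l) 1 = false.
Proof.
  intros. unfold first_neg_from. rewrite psum_cons, psum_0. simpl step.
  rewrite isneg_false; [easy|lra].
Qed.

Lemma first_neg_from_false_1 : s < x -> first_neg_from x s (false :: l) 1 = true.
Proof.
  intros. unfold first_neg_from. rewrite psum_cons, psum_0. simpl step.
  rewrite isneg_true; [easy|lra].
Qed.

Lemma first_neg_from_false_SS m : s < x -> first_neg_from x s (false :: l) (S (S m)) = false.
Proof.
  intros. unfold first_neg_from. simpl Nat.pred. simpl seq. simpl forallb.
  rewrite (psum_cons x false l 0), psum_0. simpl step.
  rewrite (isneg_true (s + (- x + 0))); [|lra]. simpl.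
  now destruct (isneg _).
Qed.

Lemma first_neg_from_true_SS m : 0 <= s -> x <= 1 ->
  first_neg_from x s (true :: l) (S (S m)) = first_neg_from x (s + (1 - x)) l (S m).
Proof.
  intros. unfold first_neg_from. simpl Nat.pred. simpl seq. simpl forallb.
  rewrite (psum_cons x true l 0), psum_0. simpl step.
  rewrite (isneg_false (s + (1 - x + 0))); [|lra]. simpl negb.
  rewrite psum_cons. simpl step. rewrite Rplus_assoc. f_equal.
  simpl andb. rewrite <- seq_shift. apply forallb_map_ext.
  intros a. now rewrite psum_cons, Rplus_assoc.
Qed.

End FirstStep.

(* From level [s], as long as [n] up-steps cannot reach [x], the walk goes negative
   at step [n + 1] exactly on the paths starting with [n] ups followed by a down. *)
Lemma sum_first_neg_from rho x n : x <= 1 -> forall s, 0 <= s -> s + INR n * (1 - x) < x ->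
  sum_bseqs (S n) (fun l => if first_neg_from x s l (S n) then weight rho l else 0) =
  rho ^ n * (1 - rho).
Proof.
  intros Hx. induction n as [|n IH]; intros s Hs Hlt; rewrite sum_bseqs_cons.
  - simpl in Hlt.
    rewrite (sum_bseqs_ext 0 _ (fun _ => 0))
      by (intros l; now rewrite first_neg_from_true_1).
    rewrite (sum_bseqs_ext 0 (fun l => if first_neg_from x s (false :: l) 1
                                      then weight rho (false :: l) else 0)
               (fun l => (1 - rho) * weight rho l))
      by (intros l; rewrite first_neg_from_false_1; [reflexivity|lra]).
    rewrite sum_bseqs_0, sum_bseqs_scal_l, sum_bseqs_weight. simpl. ring.
  - rewrite S_INR in Hlt. pose proof (pos_INR n).
    rewrite (sum_bseqs_ext (S n) _ (fun l => rho *
               (if first_neg_from x (s + (1 - x)) l (S n) then weight rho l else 0))).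
    2:{ intros l. rewrite first_neg_from_true_SS, weight_cons by easy.
        destruct (first_neg_from _ _ _ _); ring. }
    rewrite (sum_bseqs_ext (S n) (fun l => if first_neg_from x s (false :: l) (S (S n))
                                          then weight rho (false :: l) else 0) (fun _ => 0)).
    2:{ intros l. rewrite first_neg_from_false_SS; [easy|nra]. }
    rewrite sum_bseqs_0, sum_bseqs_scal_l, IH by lra. simpl. ring.
Qed.

Lemma probN_geometric rho x n :
  x <= 1 -> INR n * (1 - x) < x -> probN rho x (S n) = rho ^ n * (1 - rho).
Proof.
  intros Hx Hn. unfold probN. fold (sum_bseqs (S n)
    (fun l => if firstneg x l (S n) then weight rho l else 0)).
  rewrite (sum_bseqs_ext _ _ (fun l => if first_neg_from x 0 l (S n) then weight rho l else 0))
    by (intros l; now rewrite firstneg_eq_from_0).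
  apply sum_first_neg_from; lra.
Qed.

Lemma pow_bounds r k : 0 <= r <= 1 -> 0 <= r ^ k <= 1.
Proof. intros H. induction k; simpl; nra. Qed.

Lemma Series_geom q : 0 <= q < 1 -> Series (fun n => q ^ n) = / (1 - q).
Proof. intros. apply is_series_unique, is_series_geom. rewrite Rabs_pos_eq; lra. Qed.

Lemma ex_series_le_geom a q : 0 <= q < 1 -> (forall n, Rabs (a n) <= q ^ n) -> ex_series a.
Proof.
  intros Hq H. apply (ex_series_le a (fun n => q ^ n)); [exact H|].
  apply ex_series_geom. rewrite Rabs_pos_eq; lra.
Qed.

(* Each vanishing leading term lets one shift the series and gain a factor [q]. *)
Lemma Rabs_Series_le_geom_tail q (M : nat) : 0 <= q < 1 -> forall (a : nat -> R) C,
  (forall n, Rabs (a n) <= C * q ^ n) -> (forall n, (n < M)%nat -> a n = 0) ->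
  Rabs (Series a) <= C * q ^ M / (1 - q).
Proof.
  intros Hq. induction M as [|M IH]; intros a C Ha Hzero.
  - assert (Hgeom : ex_series (fun n => C * q ^ n)).
    { apply (ex_series_scal_l C (fun n => q ^ n)), ex_series_geom. rewrite Rabs_pos_eq; lra. }
    eapply Rle_trans; [apply Series_Rabs|].
    + apply (@ex_series_le R_AbsRing R_CompleteNormedModule
               (fun n => Rabs (a n)) (fun n => C * q ^ n)); [|exact Hgeom].
      intros n. change (Rabs (Rabs (a n)) <= C * q ^ n). now rewrite Rabs_Rabsolu.
    + eapply Rle_trans; [apply Series_le; [|exact Hgeom]|].
      * intros n. split; [apply Rabs_pos|apply Ha].
      * rewrite Series_scal_l, Series_geom by lra. simpl. right. field. lra.
  - rewrite Series_incr_1_aux by (apply Hzero; lia).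
    replace (C * q ^ S M) with (C * q * q ^ M) by (simpl; ring).
    apply IH.
    + intros n. replace (C * q * q ^ n) with (C * q ^ S n) by (simpl; ring). apply Ha.
    + intros n Hn. apply Hzero. lia.
Qed.

Lemma gfun_near_1 delta r x : 0 <= delta < 1 -> 0 <= r <= 1 -> x <= 1 ->
  Rabs (gfun delta r x - 1) <= (1 - r) / (1 - delta) ^ 2.
Proof.
  intros Hd Hr Hx.
  set (a := fun n => delta ^ n * probN r x n).
  assert (Ha : forall n, 0 <= a n <= delta ^ n - (delta * r) ^ n).
  { intros n. unfold a. rewrite Rpow_mult_distr.
    pose proof (probN_le_1_sub_pow r x n Hr Hx). pose proof (probN_ge0 r x n Hr).
    pose proof (pow_bounds delta n ltac:(lra)). nra. }
  assert (Hdiff : is_series (fun n => delta ^ n - (delta * r) ^ n)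
                    (/ (1 - delta) - / (1 - delta * r))).
  { apply (is_series_minus (fun n => delta ^ n) (fun n => (delta * r) ^ n));
      apply is_series_geom; rewrite Rabs_pos_eq; nra. }
  assert (Hle : Series a <= / (1 - delta) - / (1 - delta * r)).
  { rewrite <- (is_series_unique _ _ Hdiff). apply Series_le; [exact Ha|eexists; exact Hdiff]. }
  assert (Hge : 0 <= Series a).
  { rewrite <- (Rmult_0_l (Series a)), <- Series_scal_l. apply Series_le.
    - intros n. pose proof (Ha n). lra.
    - apply (ex_series_le_geom a delta Hd). intros n. rewrite Rabs_pos_eq by apply Ha.
      pose proof (Ha n). pose proof (pow_bounds (delta * r) n). nra. }
  unfold gfun. fold a. replace (1 - Series a - 1) with (- Series a) by ring.
  rewrite Rabs_Ropp, Rabs_pos_eq by lra.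
  eapply Rle_trans; [exact Hle|].
  assert (Hdr : 1 - delta <= 1 - delta * r) by nra.
  replace (/ (1 - delta) - / (1 - delta * r))
    with (delta * (1 - r) / ((1 - delta) * (1 - delta * r))) by (field; nra).
  unfold Rdiv. replace ((1 - delta) ^ 2) with ((1 - delta) * (1 - delta)) by ring.
  apply Rmult_le_compat; [nra|left; apply Rinv_0_lt_compat, Rmult_lt_0_compat; lra|nra|].
  apply Rinv_le_contravar; [apply Rmult_lt_0_compat|apply Rmult_le_compat_l]; lra.
Qed.

Definition geom_pmf (r : R) (n : nat) : R :=
  match n with O => 0 | S k => r ^ k * (1 - r) end.

Lemma geom_pmf_bounds r n : 0 <= r <= 1 -> 0 <= geom_pmf r n <= 1.
Proof. intros Hr. destruct n; simpl; [lra|]. pose proof (pow_bounds r n Hr). nra. Qed.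

Lemma Series_geom_pmf delta r : 0 <= delta < 1 -> 0 <= r <= 1 ->
  Series (fun n => delta ^ n * geom_pmf r n) = delta * (1 - r) / (1 - delta * r).
Proof.
  intros Hd Hr. rewrite Series_incr_1_aux by (simpl; ring).
  rewrite (Series_ext _ (fun k => delta * (1 - r) * (delta * r) ^ k))
    by (intros k; simpl; rewrite Rpow_mult_distr; ring).
  rewrite Series_scal_l, Series_geom by nra. field. nra.
Qed.

Lemma gfun_near_geometric delta r x (M : nat) :
  0 <= delta < 1 -> 0 <= r <= 1 -> x <= 1 -> INR M * (1 - x) < x ->
  Rabs (gfun delta r x - (1 - delta) / (1 - delta * r)) <= delta ^ S M / (1 - delta).
Proof.
  intros Hd Hr Hx HM.
  set (a := fun n => delta ^ n * probN r x n).
  set (b := fun n => delta ^ n * geom_pmf r n).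
  assert (Hdpow : forall n, 0 <= delta ^ n <= 1) by (intros n; apply pow_bounds; lra).
  assert (Ha : forall n, 0 <= a n <= delta ^ n).
  { intros n. unfold a. pose proof (probN_ge0 r x n Hr). pose proof (probN_le1 r x n Hr).
    pose proof (Hdpow n). nra. }
  assert (Hb : forall n, 0 <= b n <= delta ^ n).
  { intros n. unfold b. pose proof (geom_pmf_bounds r n Hr). pose proof (Hdpow n). nra. }
  assert (Hexa : ex_series a).
  { apply (ex_series_le_geom a delta Hd). intros n. rewrite Rabs_pos_eq; apply Ha. }
  assert (Hexb : ex_series b).
  { apply (ex_series_le_geom b delta Hd). intros n. rewrite Rabs_pos_eq; apply Hb. }
  assert (Hlim : (1 - delta) / (1 - delta * r) = 1 - Series b).
  { unfold b. rewrite Series_geom_pmf by lra. field. nra. }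
  unfold gfun. fold a. rewrite Hlim.
  replace (1 - Series a - (1 - Series b)) with (Series (fun n => b n - a n))
    by (rewrite Series_minus by assumption; ring).
  rewrite <- (Rmult_1_l (delta ^ S M)).
  apply Rabs_Series_le_geom_tail; [lra| |].
  - intros n. pose proof (Ha n). pose proof (Hb n). apply Rabs_le. lra.
  - intros [|k] Hk; unfold a, b; simpl geom_pmf; [rewrite probN_0; ring|].
    rewrite probN_geometric; [ring|exact Hx|].
    assert (INR k <= INR M) by (apply le_INR; lia). nra.
Qed.

Lemma rho2_bounds VP : 0 < rho2 VP < 1.
Proof.
  unfold rho2. pose proof (exp_pos VP). pose proof (exp_pos (-1)).
  split; [apply Rdiv_lt_0_compat|rewrite <- Rdiv_lt_1]; lra.
Qed.

(* [exp ((1 - p) / p) >= 1 / p] by [exp y >= 1 + y]. *)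
Lemma rho1_bounds p VP : 0 < p ->
  0 < rho1 p VP < 1 /\ 1 - rho1 p VP <= (1 + exp VP) * p.
Proof.
  intros Hp. unfold rho1. set (E := exp ((1 - p) / p)). set (K := 1 + exp VP).
  assert (HE : 0 < E) by apply exp_pos.
  assert (HK : 0 < K) by (unfold K; pose proof (exp_pos VP); lra).
  assert (HEp : / p <= E).
  { unfold E. replace (/ p) with (1 + (1 - p) / p) by (field; lra). apply exp_ineq1_le. }
  replace (1 + exp VP + E) with (K + E) by (unfold K; ring).
  split; [split; [apply Rdiv_lt_0_compat|rewrite <- Rdiv_lt_1]; lra|].
  replace (1 - E / (K + E)) with (K * / (K + E)) by (field; lra).
  apply Rmult_le_compat_l; [lra|].
  rewrite <- (Rinv_inv p). apply Rinv_le_contravar; [apply Rinv_0_lt_compat|]; lra.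
Qed.

(* Writing [c = v / (u + v)], the numerator [v] blows up like [ln (1 / p)] while
   [u] stays below [ln (1 / rho2)]. *)
Lemma cpar_near_1 p VP (M : nat) : 0 < p ->
  (1 + exp VP) * p < (1 - rho2 VP) * rho2 VP ^ M ->
  cpar p VP <= 1 /\ INR M * (1 - cpar p VP) < cpar p VP.
Proof.
  intros Hp Hsmall.
  destruct (rho1_bounds p VP Hp) as [[H1 H1'] Hgap].
  destruct (rho2_bounds VP) as [H2 H2'].
  pose proof (pow_bounds (rho2 VP) M ltac:(lra)) as Hpow.
  assert (Hpow_pos : 0 < rho2 VP ^ M) by (apply pow_lt; lra).
  assert (H12 : rho2 VP < rho1 p VP) by nra.
  set (u := ln (rho1 p VP / rho2 VP)).
  set (v := ln ((1 - rho2 VP) / (1 - rho1 p VP))).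
  change (cpar p VP) with (v / (u + v)).
  assert (Hln : ln (rho2 VP) < ln (rho1 p VP) < 0).
  { rewrite <- ln_1. split; apply ln_increasing; lra. }
  assert (Hu : 0 < u <= - ln (rho2 VP)) by (unfold u; rewrite ln_div by lra; lra).
  assert (Hv : INR M * - ln (rho2 VP) < v).
  { assert (Hlt : ln (1 - rho1 p VP) < ln ((1 - rho2 VP) * rho2 VP ^ M))
      by (apply ln_increasing; lra).
    rewrite ln_mult, ln_pow in Hlt by lra.
    unfold v. rewrite ln_div by lra. lra. }
  assert (HMu : INR M * u <= INR M * - ln (rho2 VP))
    by (apply Rmult_le_compat_l; [apply pos_INR|lra]).
  assert (Huv : 0 < u + v) by (pose proof (pos_INR M); nra).
  replace (1 - v / (u + v)) with (u / (u + v)) by (field; lra).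
  unfold Rdiv. rewrite <- Rmult_assoc. split.
  - apply Rmult_le_reg_r with (u + v); [lra|].
    rewrite Rmult_assoc, Rinv_l; lra.
  - apply Rmult_lt_compat_r; [apply Rinv_0_lt_compat|]; lra.
Qed.

Lemma at_right_0_small K T : 0 < K -> 0 < T -> at_right 0 (fun p => 0 < p /\ K * p < T).
Proof.
  intros HK HT. assert (HTK : 0 < T / K) by (apply Rdiv_lt_0_compat; lra).
  exists (mkposreal _ HTK). intros p Hball Hp. split; [exact Hp|].
  change (Rabs (p - 0) < T / K) in Hball. rewrite Rminus_0_r, Rabs_pos_eq in Hball by lra.
  rewrite Rmult_comm. now apply Rlt_div_r.
Qed.

Lemma cpar_eventually_near_1 VP (M : nat) :
  at_right 0 (fun p => cpar p VP <= 1 /\ INR M * (1 - cpar p VP) < cpar p VP).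
Proof.
  destruct (rho2_bounds VP) as [H2 H2'].
  apply (filter_imp (fun p => 0 < p /\ (1 + exp VP) * p < (1 - rho2 VP) * rho2 VP ^ M)).
  { intros p [Hp Hsmall]. exact (cpar_near_1 p VP M Hp Hsmall). }
  apply at_right_0_small; [pose proof (exp_pos VP); lra|].
  apply Rmult_lt_0_compat; [lra|apply pow_lt; lra].
Qed.

Lemma gfun_rho1_lim delta VP : 0 <= delta < 1 ->
  filterlim (fun p => gfun delta (rho1 p VP) (cpar p VP)) (at_right 0) (locally 1).
Proof.
  intros Hd. apply filterlim_locally. intros eps.
  set (C := (1 + exp VP) / (1 - delta) ^ 2).
  assert (HC : 0 < C).
  { apply Rdiv_lt_0_compat; [pose proof (exp_pos VP)|apply pow_lt]; lra. }
  eapply filter_imp; [|apply filter_and;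
    [apply (at_right_0_small C eps HC (cond_pos eps))|apply (cpar_eventually_near_1 VP 0)]].
  intros p [[Hp Hsmall] [Hc _]].
  destruct (rho1_bounds p VP Hp) as [H1 Hgap].
  change (Rabs (gfun delta (rho1 p VP) (cpar p VP) - 1) < eps).
  eapply Rle_lt_trans; [apply gfun_near_1; lra|].
  apply Rle_lt_trans with (C * p); [|exact Hsmall].
  unfold C, Rdiv. rewrite Rmult_assoc, (Rmult_comm _ p), <- Rmult_assoc.
  apply Rmult_le_compat_r; [left; apply Rinv_0_lt_compat, pow_lt|]; lra.
Qed.

Lemma gfun_rho2_lim delta VP : 0 <= delta < 1 ->
  filterlim (fun p => gfun delta (rho2 VP) (cpar p VP)) (at_right 0)
    (locally ((1 - delta) / (1 - delta * rho2 VP))).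
Proof.
  intros Hd. apply filterlim_locally. intros eps.
  destruct (rho2_bounds VP) as [H2 H2'].
  assert (Htol : 0 < eps * (1 - delta)) by (pose proof (cond_pos eps); nra).
  destruct (pow_lt_1_zero delta ltac:(rewrite Rabs_pos_eq; lra) _ Htol) as [M HM].
  eapply filter_imp; [|apply (cpar_eventually_near_1 VP M)].
  intros p [Hc HcM].
  change (Rabs (gfun delta (rho2 VP) (cpar p VP) - (1 - delta) / (1 - delta * rho2 VP)) < eps).
  eapply Rle_lt_trans; [apply gfun_near_geometric; eauto; lra|].
  specialize (HM (S M) ltac:(lia)). rewrite Rabs_pos_eq in HM by (apply pow_le; lra).
  rewrite <- Rlt_div_l in HM by lra. exact HM.
Qed.

Theorem lemma2 (delta VP : R) (hdelta : 0 <= delta < 1) (hVP : 0 <= VP) :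
  filterlim (fun p => gfun delta (rho1 p VP) (cpar p VP)) (at_right 0) (locally 1)
  /\
  filterlim (fun p => gfun delta (rho2 VP) (cpar p VP)) (at_right 0)
    (locally ((1 - delta) / (1 - delta * rho2 VP))).
Proof. split; [apply gfun_rho1_lim | apply gfun_rho2_lim]; exact hdelta. Qed.
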